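(* Let $G$ be a graph with finitely many vertices. Let $\alpha=\alpha_1\alpha_2\cdots\alpha_n$ be a path in $G$ such that there are infinitely many edges from $s(\alpha_1)$ to $r(\alpha_1)$. Let $E$ be the graph with: - vertex set $G^0$; - edge set $G^1\cup\{\alpha^m: m\in\mathbb N\}$, consisting of $G^1$ together with countably infinitely many new edges; - range and source maps extending those of $G$, with $r_E(\alpha^m)=r_G(\alpha)$ and $s_E(\alpha^m)=s_G(\alpha)$. Then $G\sim_M E$.
   Context: A graph $G=(G^0,G^1,r,s)$ has vertex set $G^0$, edge set $G^1$, and range/source maps; multiple (even infinitely many) edges and loops are allowed. A path is a sequence of edges $e_1\cdots e_n$ with $r(e_i)=s(e_{i+1})$; it has $s(e_1\cdots e_n)=s(e_1)$ and $r(e_1\cdots e_n)=r(e_n)$. A source receives no edges, a sink emits no edges, and an infinite emitter emits infinitely many edges. A vertex is singular if it is a sink or infinite emitter, and regular otherwise. Move-equivalence $\sim_M$ is the smallest equivalence relation on graphs with finitely many vertices such that $G\sim_M E$ whenever $E$ is isomorphic to a graph obtained from $G$ by one of the following moves. (S) Delete a regular source together with the edges it emits. (R) For a regular vertex $u$ emitting exactly one edge $f$, with $r(f)\neq u$, and all of whose incoming edges have the same source $v$: delete $u$, $f$ and the edges into $u$, and add for each $e\in r^{-1}(u)$ an edge $[ef]$ from $v$ to $r(f)$. (O) Out-splitting at a non-sink $v$ along a partition $\mathcal E_1,\dots,\mathcal E_n$ of $s^{-1}(v)$ with at most one infinite part. Replace $v$ by $v^1,\dots,v^n$. Each edge $e$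 into $v$ becomes copies $e^1,\dots,e^n$ with $r(e^i)=v^i$ and source $s(e)$, or source $v^j$ if $s(e)=v$ and $e\in\mathcal E_j$. An edge from $v$ to $w\neq v$ lying in $\mathcal E_i$ gets source $v^i$. (I) In-splitting at a regular non-source $v$ along a partition $\mathcal E_1,\dots,\mathcal E_n$ of $r^{-1}(v)$. Replace $v$ by $v^1,\dots,v^n$. Each edge $e$ out of $v$ becomes copies $e^1,\dots,e^n$ with $s(e^i)=v^i$ and range $r(e)$, or range $v^j$ if $r(e)=v$ and $e\in\mathcal E_j$. An edge into $v$ from $w\neq v$ lying in $\mathcal E_i$ gets range $v^i$. *)

From Stdlib Require Import Relations List.
From mathcomp Require Import all_boot.
Set Implicit Arguments. Unset Strict Implicit. Unset Printing Implicit Defensive.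

Record graph := Graph {
  gV : finType;
  gE : Type;
  gs : gE -> gV;
  gr : gE -> gV
}.

Definition finite_pred (A : Type) (P : A -> Prop) : Prop :=
  exists l : list A, forall a, P a -> List.In a l.

Definition infinite_pred (A : Type) (P : A -> Prop) : Prop := ~ finite_pred P.

Section Vertices.
Variable G : graph.
Definition is_sink (v : gV G) := forall e : gE G, gs e <> v.
Definition is_source (v : gV G) := forall e : gE G, gr e <> v.
Definition is_inf_emitter (v : gV G) := infinite_pred (fun e : gE G => gs e = v).
Definition is_regular (v : gV G) := ~ is_sink v /\ ~ is_inf_emitter v.
End Vertices.

(* [iso_to H X PV Y PE sY rY]: H is isomorphic to the graph whose vertices are
   the elements of X satisfying PV, whose edges are the elements of Y
   satisfying PE, with source sY and range rY. *)
Definition iso_to (H : graph) (X : Type) (PV : X -> Prop) (Y : Type)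
    (PE : Y -> Prop) (sY rY : Y -> X) : Prop :=
  exists (phi0 : gV H -> X) (phi1 : gE H -> Y),
    injective phi0 /\ (forall x, PV x <-> exists v, phi0 v = x) /\
    injective phi1 /\ (forall y, PE y <-> exists e, phi1 e = y) /\
    (forall e, sY (phi1 e) = phi0 (gs e) /\ rY (phi1 e) = phi0 (gr e)).

Definition move_S (G H : graph) : Prop :=
  exists u : gV G, is_regular u /\ is_source u /\
    iso_to H (fun x => x <> u) (fun e => gs e <> u) (@gs G) (@gr G).

(* Move (R).  New edges: old edges not touching u (tag inl), and one edge [ef]
   for each e into u (tag inr e), from v to r(f). *)
Definition move_R (G H : graph) : Prop :=
  exists (u : gV G) (f : gE G) (v : gV G),
    is_regular u /\ gs f = u /\ (forall e, gs e = u -> e = f) /\ gr f <> u /\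
    (forall e, gr e = u -> gs e = v) /\
    iso_to H (fun x => x <> u)
      (fun y : gE G + gE G => match y with
                  | inl e => gs e <> u /\ gr e <> u
                  | inr e => gr e = u end)
      (fun y => match y with inl e => gs e | inr _ => v end)
      (fun y => match y with inl e => gr e | inr _ => gr f end).

(* Move (O): out-splitting at a non-sink v; the partition of s^{-1}(v) into
   nonempty blocks E_1..E_n is given by a labelling c (only its values on
   edges emitted by v matter). Vertex v^i is [inr i], other vertices [inl x].
   Edge e not into v is [inl e]; copies e^i of an edge e into v are [inr (e,i)]. *)
Definition move_O (G H : graph) : Prop :=
  exists (v : gV G) (n : nat) (c : gE G -> 'I_n),
    ~ is_sink v /\
    (forall i, exists e, gs e = v /\ c e = i) /\
    (forall i j, infinite_pred (fun e => gs e = v /\ c e = i) ->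
                 infinite_pred (fun e => gs e = v /\ c e = j) -> i = j) /\
    let src := fun e : gE G => if gs e == v then inr (c e) else inl (gs e) in
    iso_to H
      (fun x : gV G + 'I_n => match x with inl w => w <> v | inr _ => True end)
      (fun y : gE G + (gE G * 'I_n) => match y with
                  | inl e => gr e <> v
                  | inr (e, _) => gr e = v end)
      (fun y => match y with inl e => src e | inr (e, _) => src e end)
      (fun y => match y with inl e => inl (gr e) | inr (_, i) => inr i end).

Definition move_I (G H : graph) : Prop :=
  exists (v : gV G) (n : nat) (c : gE G -> 'I_n),
    is_regular v /\ ~ is_source v /\
    (forall i, exists e, gr e = v /\ c e = i) /\
    let tgt := fun e : gE G => if gr e == v then inr (c e) else inl (gr e) in
    iso_to H
      (fun x : gV G + 'I_n => match x with inl w => w <> v | inr _ => True end)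
      (fun y : gE G + (gE G * 'I_n) => match y with
                  | inl e => gs e <> v
                  | inr (e, _) => gs e = v end)
      (fun y => match y with inl e => inl (gs e) | inr (_, i) => inr i end)
      (fun y => match y with inl e => tgt e | inr (e, _) => tgt e end).

Definition move_step (G H : graph) : Prop :=
  move_S G H \/ move_R G H \/ move_O G H \/ move_I G H.

Definition move_eq : graph -> graph -> Prop := clos_refl_sym_trans graph move_step.

Definition is_path (G : graph) (a1 : gE G) (rest : seq (gE G)) : bool :=
  path (fun e f : gE G => gr e == gs f) a1 rest.

(* E: add countably many new edges alpha^m (m : nat) from s(alpha) to r(alpha). *)
Definition add_path_copies (G : graph) (a1 : gE G) (rest : seq (gE G)) : graph :=
  @Graph (gV G) (gE G + nat)
    (fun y => match y with inl e => gs e | inr _ => gs a1 end)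
    (fun y => match y with inl e => gr e | inr _ => gr (last a1 rest) end).

(* Write G + (v => t) for G with countably many new edges from v to t.  The
   key step: if G has infinitely many edges v -> gs b, then G ~ G + (v => gr b).
   Out-split gs b so that b alone leaves a new vertex x, which receives copies
   of the edges v -> gs b.  In-splitting x along a partition that separates the
   even-indexed copies from the others produces a vertex fed from v only, with
   a copy of b as its only exit; move (R) contracts it, rerouting those edges to
   gr b.  As an infinite family of parallel edges is isomorphic to two copies of
   itself, this graph is the same out-splitting of G + (v => gr b) up to
   isomorphism, and undoing it gives G + (v => gr b).  Isomorphisms are moves
   (out-splitting along the one-block partition).  Along the path alpha, the
   new edges v => r(alpha_i) serve as the infinite family for the next step. *)

From mathcomp Require Import all_boot.
From Stdlib Require Import Classical ClassicalEpsilon Relations.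
Set Implicit Arguments. Unset Strict Implicit. Unset Printing Implicit Defensive.

Definition asbool (P : Prop) : bool :=
  if excluded_middle_informative P then true else false.

Lemma asboolP (P : Prop) : reflect P (asbool P).
Proof. by rewrite /asbool; case: excluded_middle_informative => h; constructor. Qed.

Section InfiniteEnumeration.
Variables (A : Type) (P : A -> Prop).
Hypothesis P_inf : infinite_pred P.

Lemma infinite_pred_avoid (l : list A) : exists a, P a /\ ~ List.In a l.
Proof.
apply: NNPP => none; apply: P_inf; exists l => a pa.
by apply: NNPP => notin; apply: none; exists a.
Qed.

Definition fresh (l : list A) : A :=
  proj1_sig (constructive_indefinite_description _ (infinite_pred_avoid l)).

Lemma freshP l : P (fresh l) /\ ~ List.In (fresh l) l.
Proof. exact: proj2_sig (constructive_indefinite_description _ (infinite_pred_avoid l)). Qed.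

Fixpoint fresh_prefix (n : nat) : list A :=
  if n is n'.+1 then fresh (fresh_prefix n') :: fresh_prefix n' else nil.

Lemma infinite_pred_enum : exists g : nat -> A, injective g /\ forall n, P (g n).
Proof.
pose g n := fresh (fresh_prefix n).
have g_prefix m n : m < n -> List.In (g m) (fresh_prefix n).
  by elim: n => // n IH; rewrite ltnS leq_eqVlt => /orP [/eqP ->|/IH]; [left | right].
exists g; split=> [m n gmn|n]; last exact: (freshP _).1.
case: (ltngtP m n) => // [lt_mn|lt_nm].
- by case: (freshP (fresh_prefix n)).2; rewrite -/(g n) -gmn; exact: g_prefix.
- by case: (freshP (fresh_prefix m)).2; rewrite -/(g m) gmn; exact: g_prefix.
Qed.

End InfiniteEnumeration.

Definition graph_iso (H H' : graph) : Prop :=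
  exists (f0 : gV H -> gV H') (g0 : gV H' -> gV H)
         (f1 : gE H -> gE H') (g1 : gE H' -> gE H),
  [/\ cancel f0 g0, cancel g0 f0, cancel f1 g1, cancel g1 f1 &
      forall e, gs (f1 e) = f0 (gs e) /\ gr (f1 e) = f0 (gr e)].

Lemma graph_iso_sym H H' : graph_iso H H' -> graph_iso H' H.
Proof.
case=> f0 [g0] [f1] [g1] [f0K g0K f1K g1K hf]; exists g0, f0, g1, f1; split=> // e.
by have [hs hr] := hf (g1 e); rewrite g1K in hs hr; rewrite hs hr !f0K.
Qed.

Lemma graph_iso_trans H1 H2 H3 : graph_iso H1 H2 -> graph_iso H2 H3 -> graph_iso H1 H3.
Proof.
case=> f0 [g0] [f1] [g1] [f0K g0K f1K g1K hf].
case=> f0' [g0'] [f1'] [g1'] [f0K' g0K' f1K' g1K' hf'].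
exists (f0' \o f0), (g0 \o g0'), (f1' \o f1), (g1 \o g1'); split.
- by move=> x /=; rewrite f0K' f0K.
- by move=> x /=; rewrite g0K g0K'.
- by move=> x /=; rewrite f1K' f1K.
- by move=> x /=; rewrite g1K g1K'.
by move=> e /=; case: (hf' (f1 e)) => -> ->; case: (hf e) => -> ->.
Qed.

Lemma iso_to_graph_iso H H' X PV Y PE sY rY :
  graph_iso H' H -> @iso_to H X PV Y PE sY rY -> @iso_to H' X PV Y PE sY rY.
Proof.
case=> f0 [g0 [f1 [g1 [f0K g0K f1K g1K hf]]]] [p0 [p1 [p0_inj [p0_onto [p1_inj [p1_onto hp]]]]]].
exists (p0 \o f0), (p1 \o f1); split; [|split; [|split; [|split]]].
- exact: inj_comp p0_inj (can_inj f0K).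
- move=> x; rewrite p0_onto.
  by split=> -[v <-]; [exists (g0 v) | exists (f0 v)]; rewrite /= ?g0K.
- exact: inj_comp p1_inj (can_inj f1K).
- move=> y; rewrite p1_onto.
  by split=> -[e <-]; [exists (g1 e) | exists (f1 e)]; rewrite /= ?g1K.
by move=> e /=; case: (hp (f1 e)) => -> ->; case: (hf e) => -> ->.
Qed.

Lemma move_O_graph_iso G H H' : graph_iso H' H -> move_O G H -> move_O G H'.
Proof.
move=> hi [v [n [c [? [? [? hO]]]]]]; exists v, n, c; do 3 split=> //.
exact: iso_to_graph_iso hi hO.
Qed.

Lemma source_not_sink G (e : gE G) : ~ is_sink (gs e).
Proof. by move/(_ e). Qed.

Lemma move_O_refl G (e0 : gE G) : move_O G G.
Proof.
exists (gs e0), 1, (fun _ => ord0); split; first exact: source_not_sink.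
split; first by move=> i; exists e0; rewrite (ord1 i).
split; first by move=> i j _ _; rewrite (ord1 i) (ord1 j).
exists (fun x => if x == gs e0 then inr ord0 else inl x),
       (fun e => if gr e == gs e0 then inr (e, ord0) else inl e).
split; [|split; [|split; [|split]]].
- by move=> x y; case: eqP => [->|_]; case: eqP => [->|_] //; case.
- case=> [w|i]; split.
  + by move=> hw; exists w; case: eqP.
  + by case=> y; case: eqP => // hy [<-].
  + by move=> _; exists (gs e0); rewrite eqxx (ord1 i).
  + done.
- by move=> e f; case: eqP => _; case: eqP => _ //; case.
- case=> [e|[e i]]; split.
  + by move=> he; exists e; case: eqP.
  + by case=> f; case: eqP => // hf [<-].
  + by move=> he; exists e; rewrite he eqxx (ord1 i).
  + by case=> f; case: eqP => // hf [<-].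
by move=> e; case: eqP.
Qed.

Lemma move_eq_trans G H K : move_eq G H -> move_eq H K -> move_eq G K.
Proof. exact: rst_trans. Qed.

Lemma move_eq_sym G H : move_eq G H -> move_eq H G.
Proof. exact: rst_sym. Qed.

Lemma move_R_eq G H : move_R G H -> move_eq G H.
Proof. by move=> m; apply: rst_step; right; left. Qed.

Lemma move_O_eq G H : move_O G H -> move_eq G H.
Proof. by move=> m; apply: rst_step; right; right; left. Qed.

Lemma move_I_eq G H : move_I G H -> move_eq G H.
Proof. by move=> m; apply: rst_step; right; right; right. Qed.

(* An isomorphism is the out-splitting along the one-block partition. *)
Lemma move_eq_graph_iso G H (e0 : gE G) : graph_iso G H -> move_eq G H.
Proof.
by move=> hi; apply/move_O_eq/(move_O_graph_iso (graph_iso_sym hi)); exact: move_O_refl e0.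
Qed.

Definition add_edges (H : graph) (a t : gV H) : graph :=
  @Graph (gV H) (gE H + nat)
    (fun y => if y is inl e then gs e else a)
    (fun y => if y is inl e then gr e else t).

Definition redirect (H : graph) (C : gE H -> bool) (t : gV H) : graph :=
  @Graph (gV H) (gE H) (@gs H) (fun e => if C e then t else gr e).

Definition parallel_seq (H : graph) (g : nat -> gE H) (a t : gV H) : Prop :=
  injective g /\ forall k, gs (g k) = a /\ gr (g k) = t.

Lemma parallel_seq_old_edges H (a t a' t' : gV H) (g : nat -> gE H) :
  parallel_seq g a' t' -> parallel_seq (fun k => inl (g k) : gE (add_edges a t)) a' t'.
Proof. by case=> g_inj gP; split=> [k k' [/g_inj]|]. Qed.

Lemma parallel_seq_new_edges H (a t : gV H) :
  parallel_seq (fun k => inr k : gE (add_edges a t)) a t.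
Proof. by split=> // k k' []. Qed.

Lemma add_edges_swap_iso H (a t1 t2 : gV H) :
  graph_iso (@add_edges (add_edges a t1) a t2) (@add_edges (add_edges a t2) a t1).
Proof.
pose sw (y : (gE H + nat) + nat) : (gE H + nat) + nat :=
  match y with inl (inl e) => inl (inl e) | inl (inr k) => inr k | inr k => inl (inr k) end.
by exists id, id, sw, sw; split=> //; case=> [[e|k]|k].
Qed.

Section SeqIndex.
Variables (A : Type) (g : nat -> A).

Definition seq_index (e : A) : option nat :=
  match excluded_middle_informative (exists k, g k = e) with
  | left ex => Some (proj1_sig (constructive_indefinite_description _ ex))
  | right _ => None
  end.

Lemma seq_indexP e k : seq_index e = Some k -> g k = e.
Proof.
rewrite /seq_index; case: excluded_middle_informative => // ex [<-].
by case: constructive_indefinite_description.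
Qed.

Lemma seq_index_g : injective g -> forall k, seq_index (g k) = Some k.
Proof.
move=> g_inj k; rewrite /seq_index.
case: excluded_middle_informative => [ex|[]]; last by exists k.
by congr Some; apply: g_inj; case: constructive_indefinite_description.
Qed.

Definition even_term (e : A) : bool :=
  if seq_index e is Some k then ~~ odd k else false.

Lemma even_termP e : even_term e -> exists k, g k = e.
Proof.
by rewrite /even_term; case h: seq_index => [k|] // _; exists k; exact: seq_indexP.
Qed.

Lemma even_term_g : injective g -> forall k, even_term (g k) = ~~ odd k.
Proof. by move=> g_inj k; rewrite /even_term seq_index_g. Qed.

End SeqIndex.

(* [g (2k)] becomes the new edge [k] and [g (2k+1)] becomes [g k]. *)
Lemma redirect_even_iso H (a t u : gV H) (g : nat -> gE H) :
  parallel_seq g a t -> graph_iso (redirect (even_term g) u) (add_edges a u).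
Proof.
case=> g_inj gP; have gK := seq_index_g g_inj.
pose f1 (e : gE H) : gE H + nat :=
  if seq_index g e is Some k then (if odd k then inl (g k./2) else inr k./2) else inl e.
pose g1 (y : gE H + nat) : gE H :=
  match y with
  | inl e => if seq_index g e is Some k then g k.*2.+1 else e
  | inr k => g k.*2
  end.
exists id, id, f1, g1; split=> //.
- move=> e; rewrite /f1 /g1; case h: (seq_index g e) => [k|] /=; last by rewrite h.
  rewrite -(seq_indexP h); case: ifP => hk; rewrite ?gK //;
  by rewrite -[in RHS](odd_double_half k) hk ?add1n ?add0n.
- case=> [e|k]; rewrite /f1 /g1 /=; last by rewrite gK odd_double doubleK.
  case h: (seq_index g e) => [k|] /=; last by rewrite h.
  by rewrite (gK k.*2.+1) /= odd_double /= uphalf_double (seq_indexP h).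
move=> e; rewrite /f1 /= /even_term; case h: (seq_index g e) => [k|] //=.
by rewrite -(seq_indexP h); case: ifP => hk /=; rewrite ?(gP _).1 ?(gP _).2.
Qed.

Lemma move_eq_add_parallel_edges H (a t : gV H) (g : nat -> gE H) :
  parallel_seq g a t -> move_eq H (add_edges a t).
Proof.
move=> hg; apply: (move_eq_graph_iso (g 0)).
apply: graph_iso_trans (redirect_even_iso t hg).
exists id, id, id, id; split=> // e /=; split=> //.
case: ifP => // he; have [k <-] := even_termP he; exact/esym/(hg.2 k).2.
Qed.

(* The [C]-edges now end at a new vertex [inr tt], whose only edge goes to [t]. *)
Definition detour (H : graph) (C : gE H -> bool) (t : gV H) : graph :=
  @Graph (gV H + unit)%type (gE H + unit)
    (fun y => if y is inl e then inl (gs e) else inr tt)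
    (fun y => if y is inl e then (if C e then inr tt else inl (gr e)) else inl t).

Lemma finite_pred1 (A : Type) (P : A -> Prop) (a : A) :
  (forall y, P y -> y = a) -> finite_pred P.
Proof. by move=> h; exists [:: a] => y /h ->; left. Qed.

Lemma ord2P (i : 'I_2) : i = ord0 \/ i = ord_max.
Proof. by case: i => -[|[|//]] hi; [left | right]; apply: val_inj. Qed.

(* In-splitting at [gs b] along the partition of its incoming edges by [C]. *)
Lemma move_I_detour H (b : gE H) (C : gE H -> bool) (e0 e1 : gE H) :
  gr b <> gs b -> (forall e, gs e = gs b -> e = b) ->
  (forall e, C e -> gr e = gs b) -> C e0 -> gr e1 = gs b -> ~~ C e1 ->
  move_I H (detour C (gr b)).
Proof.
set x := gs b => hux b_uniq hC he0 he1 he1'.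
have ord0_max : (ord0 : 'I_2) <> ord_max by [].
exists x, 2, (fun e => if C e then ord0 else ord_max).
split; first by split; [move/(_ b) | move/(_ (finite_pred1 b_uniq))].
split; first by move/(_ e0); apply; exact: hC.
split.
  move=> i; case: (ord2P i) => ->; first by exists e0; rewrite he0 (hC e0 he0).
  by exists e1; rewrite (negbTE he1') he1.
exists (fun y : gV H + unit => if y is inl z then (if z == x then inr ord_max else inl z)
                              else inr ord0),
  (fun y : gE H + unit => if y is inl e then (if gs e == x then inr (e, ord_max) else inl e)
                          else inr (b, ord0)).
split; [|split; [|split; [|split]]].
- by move=> [z|[]] [z'|[]] /=; do ?case: eqP; move=> *; subst; congruence.
- case=> [z|i]; split.
  + by move=> hz; exists (inl z); case: eqP.
  + by case=> [[y|[]]] //=; case: eqP => // hy [<-].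
  + by case: (ord2P i) => -> _; [exists (inr tt) | exists (inl x); rewrite eqxx].
  + done.
- by move=> [z|[]] [z'|[]] /=; do ?case: eqP; move=> *; subst; congruence.
- case=> [e|[e i]]; split.
  + by move=> he; exists (inl e); case: eqP.
  + by case=> [[y|[]]] //=; case: eqP => // hy [<-].
  + move=> he; case: (ord2P i) => ->.
      by exists (inr tt); rewrite (b_uniq _ he).
    by exists (inl e); rewrite he eqxx.
  + by case=> [[y|[]]] //=; [case: eqP => // hy [<- _] | move=> [<- _]].
- move=> [e|[]] /=; last by split=> //; case: eqP.
  split; first by case: eqP => hs //=; rewrite hs eqxx.
  by case: (gs e == x); case hc: (C e) => /=; rewrite ?(hC e hc) ?eqxx //; case: eqP.
Qed.

(* The new vertex of a detour has a single exit and receives edges from [a] only. *)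
Lemma move_R_detour H (C : gE H -> bool) (a t : gV H) :
  (forall e, C e -> gs e = a) -> move_R (detour C t) (redirect C t).
Proof.
move=> hC; exists (inr tt), (inr tt), (inl a).
split; first split.
- by move/(_ (inr tt)).
- by apply; apply: (finite_pred1 (a := inr tt)) => [[e|[]]].
split; first by [].
split; first by move=> [e|[]].
split; first by [].
split; first by move=> [e|[]] //=; case hc: (C e) => // _; rewrite hC.
exists (fun y : gV H => inl y : gV (detour C t)),
  (fun e : gE H => if C e then inr (inl e) else inl (inl e) : gE (detour C t) + gE (detour C t)).
split; [|split; [|split; [|split]]].
- by move=> ? ? [].
- by case=> [z|[]]; split=> //; [exists z | case].
- by move=> e e'; case: ifP; case: ifP => // _ _ [].
- case=> [[e|[]]|[e|[]]] /=; split.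
  + by case: ifP => hc [h1 h2] //; exists e; rewrite hc.
  + by case=> e'; case: ifP => // hc [<-]; rewrite hc.
  + by move=> [].
  + by case=> e'; case: ifP.
  + by case: ifP => // hc _; exists e; rewrite hc.
  + by case=> e'; case: ifP => // hc [<-]; rewrite hc.
  + by [].
  + by case=> e'; case: ifP.
move=> e /=; case hc: (C e) => /=; last by rewrite hc.
by have /= -> := hC e hc.
Qed.

Lemma move_eq_shortcut_sole_exit H (a : gV H) (b : gE H) (g : nat -> gE H) :
  gr b <> gs b -> (forall e, gs e = gs b -> e = b) -> parallel_seq g a (gs b) ->
  move_eq H (add_edges a (gr b)).
Proof.
move=> hb b_uniq hg; have even_g := even_term_g hg.1.
have hC e : even_term g e -> gs e = a /\ gr e = gs b.
  by move=> he; have [k <-] := even_termP he; exact: hg.2 k.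
apply: (@move_eq_trans _ (detour (even_term g) (gr b))).
  apply/move_I_eq/(move_I_detour (e0 := g 0) (e1 := g 1)); rewrite ?even_g //.
  - by move=> e /hC [].
  - exact: (hg.2 1).2.
apply: (@move_eq_trans _ (redirect (even_term g) (gr b))).
  by apply/move_R_eq/(move_R_detour (a := a)) => e /hC [].
apply: (move_eq_graph_iso (G := redirect _ _) (g 0)); exact: redirect_even_iso hg.
Qed.

(* The out-splitting at [gs b] along the partition {b}, rest: [b] alone now
   leaves from the new vertex [inr tt], and the edges into [gs b] are doubled,
   the copies [inr _] going to [inr tt]. *)
Definition split_off (K : graph) (b : gE K) : graph :=
  let src (e : gE K) : gV K + unit := if asbool (e = b) then inr tt else inl (gs e) in
  @Graph (gV K + unit)%type (gE K + {e : gE K | gr e = gs b})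
    (fun y => match y with inl e => src e | inr e => src (sval e) end)
    (fun y => match y with inl e => inl (gr e) | inr _ => inr tt end).

Lemma move_O_split_off K (b e' : gE K) : gs e' = gs b -> e' <> b -> move_O K (split_off b).
Proof.
set w := gs b => he' hne.
have ord0_max : (ord0 : 'I_2) <> ord_max by [].
pose c e : 'I_2 := if asbool (e = b) then ord0 else ord_max.
exists w, 2, c.
split; first exact: source_not_sink.
split.
  move=> i; case: (ord2P i) => ->; [exists b | exists e'];
  by split=> //; rewrite /c; case: asboolP.
split.
  have fin0 : finite_pred (fun e => gs e = w /\ c e = ord0).
    by apply: (finite_pred1 (a := b)) => e [_]; rewrite /c; case: asboolP.
  by move=> i j; case: (ord2P i) => ->; case: (ord2P j) => -> // => [/(_ fin0)|_ /(_ fin0)].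
cbv zeta.
pose p0 (y : gV K + unit) : gV K + 'I_2 :=
  if y is inl z then (if z == w then inr ord_max else inl z) else inr ord0.
have p0_src e : p0 (if asbool (e = b) then inr tt else inl (gs e))
                = if gs e == w then inr (c e) else inl (gs e).
  by rewrite /p0 /c; case: asboolP => [->|_]; [rewrite eqxx | case: eqP].
exists p0, (fun y : gE K + {e : gE K | gr e = w} =>
  match y with
  | inl e => if gr e == w then inr (e, ord_max) else inl e
  | inr e => inr (sval e, ord0)
  end).
split; [|split; [|split; [|split]]].
- by move=> [z|[]] [z'|[]] /=; rewrite /p0; do ?case: eqP; move=> *; subst; congruence.
- case=> [z|i]; split.
  + by move=> hz; exists (inl z); rewrite /p0; case: eqP.
  + by case=> [[y|[]]] //=; rewrite /p0; case: eqP => // hy [<-].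
  + by case: (ord2P i) => -> _; [exists (inr tt) | exists (inl w); rewrite /p0 eqxx].
  + done.
- move=> [e|[e pe]] [f|[f' pf]] /=; last first.
    by case=> h; subst f'; rewrite (eq_irrelevance pe pf).
  1-3: by repeat case: eqP => ?; move=> h; congruence.
- case=> [e|[e i]]; split.
  + by move=> he; exists (inl e); case: eqP.
  + by case=> [[y|y]] //=; case: eqP => // hy [<-].
  + move=> he; case: (ord2P i) => ->; first by exists (inr (exist _ e he)).
    by exists (inl e); rewrite he eqxx.
  + by case=> [[y|[y py]]] //=; [case: eqP => // hy [<- _] | move=> [<- _]].
- move=> [e|[e pe]] /=; last by rewrite p0_src.
  by split; [rewrite p0_src; case: eqP | rewrite /p0; case: eqP].
Qed.

Lemma split_off_source K (b : gE K) : gs (inl b : gE (split_off b)) = inr tt.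
Proof. by rewrite /=; case: asboolP. Qed.

Lemma split_off_sole_exit K (b : gE K) : gr b <> gs b ->
  forall e : gE (split_off b), gs e = gs (inl b : gE (split_off b)) -> e = inl b.
Proof.
move=> hb; rewrite split_off_source => -[e|[e he]] /=; case: asboolP => // heb _.
- by rewrite heb.
- by case: hb; rewrite -{1}heb.
Qed.

Lemma split_off_parallel_seq K (v : gV K) (b : gE K) (g : nat -> gE K) :
  gr b <> gs b -> parallel_seq g v (gs b) ->
  exists g' : nat -> gE (split_off b), parallel_seq g' (inl v) (gs (inl b : gE (split_off b))).
Proof.
move=> hb [g_inj gP]; rewrite split_off_source.
exists (fun k => inr (exist (fun e => gr e = gs b) (g k) (gP k).2)); split.
  by move=> k k' [/g_inj].
move=> k /=; split=> //; case: asboolP => [gkb|_]; last by rewrite (gP k).1.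
by case: hb; rewrite -{1}gkb (gP k).2.
Qed.

Lemma asbool_inl (A B : Type) (x y : A) : asbool (@inl A B x = inl y) = asbool (x = y).
Proof.
by case: (asboolP (x = y)) => [->|hne]; case: asboolP => // h; case: h.
Qed.

Lemma add_edges_split_off_iso G (v u : gV G) (b : gE G) : u <> gs b ->
  graph_iso (@add_edges (split_off b) (inl v) (inl u))
            (split_off (inl b : gE (add_edges v u))).
Proof.
move=> hu.
pose f1 (y : gE (@add_edges (split_off b) (inl v) (inl u)))
  : gE (split_off (inl b : gE (add_edges v u))) :=
  match y with
  | inl (inl e) => inl (inl e)
  | inl (inr s) =>
      inr (exist (fun y : gE (add_edges v u) => gr y = gs b) (inl (sval s)) (proj2_sig s))
  | inr k => inl (inr k)
  end.
pose g1 (y : gE (split_off (inl b : gE (add_edges v u))))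
  : gE (@add_edges (split_off b) (inl v) (inl u)) :=
  match y with
  | inl (inl e) => inl (inl e)
  | inl (inr k) => inr k
  | inr (exist (inl e) p) => inl (inr (exist (fun y : gE G => gr y = gs b) e p))
  | inr (exist (inr k) _) => inr k
  end.
exists id, id, f1, g1; split=> //.
- by case=> [[e|[e p]]|k].
- by case=> [[e|k]|[[e|k] p]].
by case=> [[e|[e p]]|k] /=; rewrite ?asbool_inl //; split=> //; case: asboolP.
Qed.

(* Unless [b] is the only edge out of its source, first give it a source of its
   own by out-splitting. *)
Lemma move_eq_shortcut G (v : gV G) (b : gE G) (g : nat -> gE G) :
  parallel_seq g v (gs b) -> move_eq G (add_edges v (gr b)).
Proof.
move=> hg; have [loop | /eqP hb] := eqVneq (gr b) (gs b).
  by rewrite loop; exact: move_eq_add_parallel_edges hg.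
have [[e' [he' hne]] | sole] := classic (exists e', gs e' = gs b /\ e' <> b); last first.
  apply: move_eq_shortcut_sole_exit hg => // e he.
  by apply: NNPP => hne; apply: sole; exists e.
have [g' hg'] := split_off_parallel_seq hb hg.
have shortcut_split : move_eq (split_off b) (@add_edges (split_off b) (inl v) (inl (gr b))).
  apply: move_eq_shortcut_sole_exit (split_off_sole_exit hb) hg'.
  by rewrite split_off_source.
apply: move_eq_trans (move_O_eq (move_O_split_off he' hne)) _.
apply: move_eq_trans shortcut_split _.
apply: move_eq_trans
  (move_eq_graph_iso (G := add_edges _ _) (inr 0) (add_edges_split_off_iso v hb)) _.
apply/move_eq_sym/move_O_eq.
by apply: (@move_O_split_off (add_edges v (gr b)) (inl b) (inl e')) => // -[].
Qed.

Fixpoint walk_from (G : graph) (w : gV G) (p : seq (gE G)) : Prop :=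
  if p is e :: p' then gs e = w /\ walk_from (gr e) p' else True.

Lemma is_path_walk G (a1 : gE G) rest : is_path a1 rest -> walk_from (gr a1) rest.
Proof. by elim: rest a1 => //= e rest IH a1 /andP [/eqP -> /IH]. Qed.

Lemma walk_from_add_edges H (a t w : gV H) p :
  walk_from w p -> @walk_from (add_edges a t) w (map inl p).
Proof. by elim: p w => //= e p IH w [-> /IH]. Qed.

Lemma move_eq_add_edges_walk G (v w : gV G) (g : nat -> gE G) p :
  parallel_seq g v w -> walk_from w p -> move_eq G (add_edges v (last w [seq gr e | e <- p])).
Proof.
(* Induction on [size p], since [p] lives in the edge type of a changing graph. *)
move: {2}(size p) (erefl (size p)) => n.
elim: n G v w g p => [|n IH] G v w g [|b p] //= size_p hg.
  by move=> _; exact: move_eq_add_parallel_edges hg.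
case: size_p => size_p [hb hp]; set u := last (gr b) [seq gr e | e <- p].
have hg_b : parallel_seq g v (gs b) by rewrite hb.
have to_b : move_eq G (add_edges v (gr b)) := move_eq_shortcut hg_b.
have to_bu : move_eq (add_edges v (gr b)) (@add_edges (add_edges v (gr b)) v u).
  have := IH (add_edges v (gr b)) _ _ _ (map inl p) _ (parallel_seq_new_edges v (gr b))
              (walk_from_add_edges _ _ hp).
  by rewrite size_map -map_comp; apply.
have from_u : move_eq (add_edges v u) (@add_edges (add_edges v u) v (gr b)) :=
  @move_eq_shortcut (add_edges v u) v (inl b) _ (parallel_seq_old_edges v u hg_b).
apply: move_eq_trans to_b (move_eq_trans to_bu _).
apply: move_eq_trans _ (move_eq_sym from_u).
apply: (move_eq_graph_iso (G := add_edges _ _) (inr 0)); exact: add_edges_swap_iso.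
Qed.

Theorem theorem5p4 (G : graph) (a1 : gE G) (rest : seq (gE G)) :
  is_path a1 rest ->
  infinite_pred (fun e : gE G => gs e = gs a1 /\ gr e = gr a1) ->
  move_eq G (add_path_copies a1 rest).
Proof.
move=> hpath /infinite_pred_enum [g hg].
suff : move_eq G (add_edges (gs a1) (gr (last a1 rest))) by [].
by rewrite -last_map; exact: move_eq_add_edges_walk hg (is_path_walk hpath).
Qed.
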